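(* Let $\epsilon$ be a primitive cube root of unity and, for $\mathbf{a}=(\alpha,\beta,\gamma)\in\mathbb{C}^3$, let $\mathcal{U}_{\mathbf{a}}\subset\mathbb{C}^4$ be the hypersurface $X^2-U^2=(Y-V+\alpha)(Y-\epsilon V+\beta)(Y-\epsilon^2V+\gamma)$. Then: (1) if $\alpha+\epsilon\beta+\epsilon^2\gamma=0$, $\mathcal{U}_{\mathbf{a}}$ has a unique singular point, which is analytically a cusp of the same type as $\mathcal{U}_0=\{X^2-U^2-Y^3+V^3=0\}$; (2) if $\alpha+\epsilon\beta+\epsilon^2\gamma\neq0$, $\mathcal{U}_{\mathbf{a}}$ has exactly three distinct singular points, all ordinary double points; (3) the family $\{\mathcal{U}_{\mathbf{a}}\}$ is the pull-back of the miniversal deformation $\{\mathcal{X}_\Lambda\}_{\Lambda\in T^1}$ of the cusp along a holomorphic map germ $g:(\mathbb{C}^3,0)\to(T^1,0)$ whose image is the curve $C=\{\sigma^3-27\lambda=\mu=\nu=0\}$; explicitly, up to a nonzero constant $k$, $g(\mathbf{a})=(-k^3s^3,0,0,-3ks)$ with $s=\alpha+\epsilon\beta+\epsilon^2\gamma$, in coordinates $(\lambda,\mu,\nu,\sigma)$.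
   Context: The miniversal deformation of the cusp $x^2-y^3=z^2-w^3$ is $\mathcal{X}_\Lambda=\{x^2-y^3-z^2+w^3+\lambda+\mu y-\nu w+\sigma yw=0\}$, $\Lambda=(\lambda,\mu,\nu,\sigma)\in T^1\cong\mathbb{C}^4$. The cusp equation factors as $(X-U)(X+U)=(Y-V)(Y-\epsilon V)(Y-\epsilon^2V)$. *)

From HB Require Import structures.
From mathcomp Require Import all_boot all_order all_algebra.
Set Implicit Arguments. Unset Strict Implicit. Unset Printing Implicit Defensive.
Import Order.TTheory GRing.Theory Num.Theory.
Local Open Scope ring_scope.

Section MPoly4.
Variable R : comNzRingType.

Definition mpoly4 := {poly {poly {poly {poly R}}}}.

Definition mc (c : R) : mpoly4 := c%:P%:P%:P%:P.

(* the variables: X_3 is the outermost, X_0 the innermost *)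
Definition mX (i : 'I_4) : mpoly4 :=
  match val i with
  | 0 => 'X%:P%:P%:P
  | 1 => 'X%:P%:P
  | 2 => 'X%:P
  | _ => 'X
  end.

Definition meval (p : mpoly4) (x : 'rV[R]_4) : R :=
  p.[(x 0 3)%:P%:P%:P].[(x 0 2)%:P%:P].[(x 0 1)%:P].[x 0 0].

Definition mpd (i : 'I_4) (p : mpoly4) : mpoly4 :=
  match val i with
  | 0 => map_poly (map_poly (map_poly deriv)) p
  | 1 => map_poly (map_poly deriv) p
  | 2 => map_poly deriv p
  | _ => deriv p
  end.

Definition msing (f : mpoly4) (x : 'rV[R]_4) : Prop :=
  meval f x = 0 /\ forall i : 'I_4, meval (mpd i f) x = 0.

Definition mhess (f : mpoly4) (x : 'rV[R]_4) : 'M[R]_4 :=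
  \matrix_(i < 4, j < 4) meval (mpd i (mpd j f)) x.

Definition odp (f : mpoly4) (x : 'rV[R]_4) : Prop :=
  msing f x /\ \det (mhess f x) != 0.

(* Coordinates (X, Y, U, V) = (X_0, X_1, X_2, X_3); a = (alpha, beta, gamma).
   U_a : X^2 - U^2 = (Y - V + alpha)(Y - eps V + beta)(Y - eps^2 V + gamma) *)
Definition Ua (eps : R) (a : 'rV[R]_3) : mpoly4 :=
  mX 0 ^+ 2 - mX 2 ^+ 2
  - (mX 1 - mX 3 + mc (a 0 0))
    * (mX 1 - mc eps * mX 3 + mc (a 0 1))
    * (mX 1 - mc (eps ^+ 2) * mX 3 + mc (a 0 2)).

Definition sfun (eps : R) (a : 'rV[R]_3) : R :=
  a 0 0 + eps * a 0 1 + eps ^+ 2 * a 0 2.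

(* Miniversal deformation, coordinates (x, y, z, w) = (X_0, ..., X_3),
   Lambda = (lambda, mu, nu, sigma) = (L 0 0, L 0 1, L 0 2, L 0 3):
   x^2 - y^3 - z^2 + w^3 + lambda + mu y - nu w + sigma y w *)
Definition Xmv (L : 'rV[R]_4) : mpoly4 :=
  mX 0 ^+ 2 - mX 1 ^+ 3 - mX 2 ^+ 2 + mX 3 ^+ 3
  + mc (L 0 0) + mc (L 0 1) * mX 1 - mc (L 0 2) * mX 3
  + mc (L 0 3) * mX 1 * mX 3.

Definition gmap (k eps : R) (a : 'rV[R]_3) : 'rV[R]_4 :=
  let s := sfun eps a in
  \row_(i < 4) nth 0 [:: - (k ^+ 3 * s ^+ 3); 0; 0; - (3%:R * k * s)] i.

Definition onC (L : 'rV[R]_4) : Prop :=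
  L 0 3 ^+ 3 - 27%:R * L 0 0 = 0 /\ L 0 1 = 0 /\ L 0 2 = 0.

End MPoly4.

From HB Require Import structures.
From mathcomp Require Import all_boot all_order all_algebra.
From mathcomp Require Import ring.
Import Order.TTheory GRing.Theory Num.Theory.
Local Open Scope ring_scope.
Set Implicit Arguments. Unset Strict Implicit. Unset Printing Implicit Defensive.

(* Write l0, l1, l2 for the linear factors Y - V + alpha, Y - eps V + beta,
   Y - eps^2 V + gamma of U_a.  A point of U_a is singular iff X = U = 0 and two
   of the l_i vanish there, i.e. iff it is one of the pairwise intersection
   points of the three lines l_i = 0 of the (Y, V)-plane.  The identity
   l0 + eps l1 + eps^2 l2 = s shows that the lines are concurrent iff s = 0: then
   the common point is the only singular point and translating it to the origin
   turns U_a into U_0; otherwise the three points are distinct and at each of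
   them the Hessian determinant equals -12 s^2 <> 0.  Finally, after the shift
   Y |-> Y + (alpha + beta + gamma)/3, V |-> V - (alpha + eps^2 beta + eps gamma)/3
   the factorisation (u + v + w)(u + eps v + eps^2 w)(u + eps^2 v + eps w)
   = u^3 + v^3 + w^3 - 3uvw exhibits U_a as the member of the miniversal
   deformation with lambda = -s^3/27, mu = nu = 0, sigma = -s. *)

Definition derivation (S : comNzRingType) (D : S -> S) :=
  {morph D : u v / u + v} /\ forall u v, D (u * v) = D u * v + u * D v.

Section Derivation.
Variables (S : comNzRingType) (D : S -> S).
Hypothesis hD : derivation D.

Lemma derivation0 : D 0 = 0.
Proof. by case: hD => DD _; apply: (@addrI _ (D 0)); rewrite -DD !addr0. Qed.

Lemma derivationN : {morph D : u / - u}.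
Proof.
case: hD => DD _ u; apply: (@addrI _ (D u)).
by rewrite -DD !subrr derivation0.
Qed.

Lemma derivation1 : D 1 = 0.
Proof.
case: hD => _ DM; apply: (@addIr _ (D 1)).
by rewrite add0r -{3}[1]mulr1 DM mulr1 mul1r.
Qed.

Lemma derivation_map_poly : derivation (map_poly D).
Proof.
case: hD => DD DM; split=> p q; apply/polyP => i.
  by rewrite coefD !coef_map_id0 ?derivation0 // coefD DD.
rewrite coefD !coefM !coef_map_id0 ?derivation0 // coefM.
rewrite (big_morph D DD derivation0) -big_split /=; apply: eq_bigr => j _.
by rewrite DM !coef_map_id0 ?derivation0.
Qed.

Lemma derivation_polyC c : map_poly D c%:P = (D c)%:P.
Proof.
apply/polyP=> i; rewrite coef_map_id0 ?derivation0 // !coefC.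
by case: (i == 0)%N; rewrite ?derivation0.
Qed.

Lemma derivation_polyX : map_poly D 'X = 0.
Proof.
apply/polyP=> i; rewrite coef_map_id0 ?derivation0 // coefX coef0.
by case: (i == 1)%N; rewrite ?derivation1 ?derivation0.
Qed.

Lemma derivation_exp u n : D (u ^+ n) = (u ^+ n.-1 * D u) *+ n.
Proof.
elim: n => [|n IHn]; first by rewrite expr0 mulr0n derivation1.
case: hD => _ DM; rewrite exprS DM IHn.
case: n {IHn} => [|n]; first by rewrite mulr0n mulr0 addr0 expr0 mulr1 mul1r.
by rewrite mulrnAr mulrA -exprS mulrC -mulrS.
Qed.
End Derivation.

Lemma derivation_deriv (S : comNzRingType) : derivation (@deriv S).
Proof. by split; [exact: derivD | exact: derivM]. Qed.

Ltac solve_derivation := do ? apply: derivation_map_poly; exact: derivation_deriv.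

Section PartialDerivatives.
Variable R : comNzRingType.
Implicit Types (p q : mpoly4 R) (i j : 'I_4) (x : 'rV[R]_4).

(* The ring of each polyC layer is explicit: the untyped rewrites do not terminate. *)
Lemma mc0 : mc 0 = 0 :> mpoly4 R.
Proof.
by rewrite /mc (@polyC0 R) (@polyC0 {poly R}) (@polyC0 {poly {poly R}})
  (@polyC0 {poly {poly {poly R}}}).
Qed.

Lemma mc1 : mc 1 = 1 :> mpoly4 R.
Proof.
by rewrite /mc (@polyC1 R) (@polyC1 {poly R}) (@polyC1 {poly {poly R}})
  (@polyC1 {poly {poly {poly R}}}).
Qed.

Lemma mc_nat n : mc n%:R = n%:R :> mpoly4 R.
Proof.
by rewrite /mc (@polyC_natr R) (@polyC_natr {poly R}) (@polyC_natr {poly {poly R}})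
  (@polyC_natr {poly {poly {poly R}}}).
Qed.

Lemma mpd_derivation i : derivation (@mpd R i).
Proof. by rewrite /mpd; case: (val i) => [|[|[|n]]]; solve_derivation. Qed.

Lemma mpdD i : {morph @mpd R i : p q / p + q}.
Proof. by case: (mpd_derivation i). Qed.

Lemma mpdN i : {morph @mpd R i : p / - p}.
Proof. exact: derivationN (mpd_derivation i). Qed.

Lemma mpdM i p q : mpd i (p * q) = mpd i p * q + p * mpd i q.
Proof. by case: (mpd_derivation i). Qed.

Lemma mpdX i p n : mpd i (p ^+ n) = (p ^+ n.-1 * mpd i p) *+ n.
Proof. exact: (derivation_exp (mpd_derivation i) p n). Qed.

Lemma mpd_mc i (c : R) : mpd i (mc c) = 0.
Proof.
rewrite /mpd /mc; case: (val i) => [|[|[|n]]] /=; do ? rewrite derivation_polyC; try solve_derivation.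
all: by apply/eqP; rewrite derivC ?polyC_eq0.
Qed.

Lemma mpd_mX_neq i j : i != j -> mpd i (mX R j) = 0.
Proof.
case: i j => [[|[|[|[|//]]]] Hi] [[|[|[|[|//]]]] Hj] //; rewrite /mpd /mX /= => _.
all: do ? rewrite derivation_polyC; try solve_derivation.
all: rewrite ?derivC; do ? rewrite derivation_polyX; try solve_derivation.
all: by apply/eqP; rewrite ?polyC_eq0.
Qed.

Lemma mpd_mX_eq i : mpd i (mX R i) = 1.
Proof.
case: i => [[|[|[|[|//]]]] Hi]; rewrite /mpd /mX /=.
all: do ? rewrite derivation_polyC; try solve_derivation.
all: rewrite derivX ?(@polyC1 {poly R}) ?(@polyC1 {poly {poly R}}).
all: by rewrite ?(@polyC1 {poly {poly {poly R}}}).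
Qed.

Lemma mpd_mX i j : mpd i (mX R j) = mc (i == j)%:R.
Proof. by case: eqVneq => [<-|/mpd_mX_neq ->]; rewrite ?mpd_mX_eq ?mc0 ?mc1. Qed.

Lemma mevalD x p q : meval (p + q) x = meval p x + meval q x.
Proof. by rewrite /meval !hornerD. Qed.

Lemma mevalN x p : meval (- p) x = - meval p x.
Proof. by rewrite /meval !hornerN. Qed.

Lemma mevalM x p q : meval (p * q) x = meval p x * meval q x.
Proof. by rewrite /meval !hornerM. Qed.

Lemma mevalX x p n : meval (p ^+ n) x = meval p x ^+ n.
Proof. by rewrite /meval !horner_exp. Qed.

Lemma meval_mc x (c : R) : meval (mc c) x = c.
Proof. by rewrite /meval /mc !hornerC. Qed.

Lemma meval_mX x i : meval (mX R i) x = x 0 i.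
Proof.
by case: i => [[|[|[|[|//]]]] Hi]; rewrite /meval /mX /= ?(hornerC, hornerX);
  congr (x 0 _); apply/val_inj.
Qed.
End PartialDerivatives.

(* Values and partial derivatives of explicit polynomials are computed on syntax
   trees: rewriting directly in the nested polynomial type makes unification
   unfold polynomial arithmetic, which is prohibitively slow. *)
Section Reification.
Variable R : comNzRingType.

Inductive mterm :=
  | MVar of 'I_4
  | MConst of R
  | MAdd of mterm & mterm
  | MOpp of mterm
  | MMul of mterm & mterm
  | MExp of mterm & nat.

Fixpoint mterm_poly t : mpoly4 R :=
  match t with
  | MVar i => mX R i
  | MConst c => mc c
  | MAdd s u => mterm_poly s + mterm_poly u
  | MOpp s => - mterm_poly s
  | MMul s u => mterm_poly s * mterm_poly u
  | MExp s n => mterm_poly s ^+ n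
  end.

Fixpoint mterm_eval (x : 'rV[R]_4) t : R :=
  match t with
  | MVar i => x 0 i
  | MConst c => c
  | MAdd s u => mterm_eval x s + mterm_eval x u
  | MOpp s => - mterm_eval x s
  | MMul s u => mterm_eval x s * mterm_eval x u
  | MExp s n => mterm_eval x s ^+ n
  end.

Fixpoint mterm_pd (i : 'I_4) t : mterm :=
  match t with
  | MVar j => MConst (i == j)%:R
  | MConst _ => MConst 0
  | MAdd s u => MAdd (mterm_pd i s) (mterm_pd i u)
  | MOpp s => MOpp (mterm_pd i s)
  | MMul s u => MAdd (MMul (mterm_pd i s) u) (MMul s (mterm_pd i u))
  | MExp s n => MMul (MMul (MConst n%:R) (MExp s n.-1)) (mterm_pd i s)
  end.

Lemma meval_mterm x t : meval (mterm_poly t) x = mterm_eval x t.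
Proof.
elim: t => [i|c|s IHs u IHu|s IHs|s IHs u IHu|s IHs n] /=.
- exact: meval_mX.
- exact: meval_mc.
- by rewrite mevalD IHs IHu.
- by rewrite mevalN IHs.
- by rewrite mevalM IHs IHu.
- by rewrite mevalX IHs.
Qed.

Lemma mpd_mterm i t : mpd i (mterm_poly t) = mterm_poly (mterm_pd i t).
Proof.
elim: t => [j|c|s IHs u IHu|s IHs|s IHs u IHu|s IHs n] /=.
- exact: mpd_mX.
- by rewrite mpd_mc mc0.
- by rewrite mpdD IHs IHu.
- by rewrite mpdN IHs.
- by rewrite mpdM IHs IHu.
- by rewrite mpdX IHs mc_nat mulr_natl mulrnAl.
Qed.
End Reification.
Arguments MVar {R}.

Section PrimitiveCubeRoot.
Variables (R : idomainType) (eps : R).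
Hypothesis heps : 3.-primitive_root eps.

Lemma prim3_expr3 : eps ^+ 3 = 1.
Proof. exact: prim_expr_order heps. Qed.

Lemma prim3_neq0 : eps != 0.
Proof. by rewrite (prim_root_eq0 heps). Qed.

Lemma prim3_neq1 : eps != 1.
Proof. by have := prim_order_dvd heps 1; rewrite expr1 => <-. Qed.

Lemma prim3_sqr_neq1 : eps ^+ 2 != 1.
Proof. by rewrite -(prim_order_dvd heps 2). Qed.

Lemma prim3_sqr_neq : eps != eps ^+ 2.
Proof.
by rewrite exprS -{1}[eps]mulr1 (inj_eq (mulfI prim3_neq0)) eq_sym prim3_neq1.
Qed.

Lemma prim3_sum : 1 + eps + eps ^+ 2 = 0.
Proof.
have : (eps - 1) * (1 + eps + eps ^+ 2) = eps ^+ 3 - 1 by ring.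
rewrite prim3_expr3 subrr => /eqP; rewrite mulf_eq0 subr_eq0 (negbTE prim3_neq1).
by move/eqP.
Qed.

Lemma eq_mod_prim3 (u v p q : R) :
  u - v = (1 + eps + eps ^+ 2) * p + (eps ^+ 3 - 1) * q -> u = v.
Proof. by rewrite prim3_sum prim3_expr3 subrr !mul0r addr0 => /eqP; rewrite subr_eq0 => /eqP. Qed.

Lemma prim3_cube_sum (u v w : R) :
  (u + v + w) * (u + eps * v + eps ^+ 2 * w) * (u + eps ^+ 2 * v + eps * w)
  = u ^+ 3 + v ^+ 3 + w ^+ 3 - 3 * u * v * w.
Proof.
apply: (eq_mod_prim3 (p := (u + v + w) * (u * v + u * w + v * w))
                     (q := (u + v + w) * (v ^+ 2 + w ^+ 2 + eps * v * w))).
ring.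
Qed.
End PrimitiveCubeRoot.

Lemma forall_ord4 (P : 'I_4 -> Prop) : P 0 -> P 1 -> P 2 -> P 3 -> forall i, P i.
Proof.
move=> P0 P1 P2 P3 [[|[|[|[|//]]]] Hi].
- by rewrite (_ : Ordinal Hi = 0) //; apply/val_inj.
- by rewrite (_ : Ordinal Hi = 1) //; apply/val_inj.
- by rewrite (_ : Ordinal Hi = 2) //; apply/val_inj.
- by rewrite (_ : Ordinal Hi = 3) //; apply/val_inj.
Qed.

Lemma sum_ord3 (R : nmodType) (F : 'I_3 -> R) : \sum_(i < 3) F i = F 0 + F 1 + F 2.
Proof.
rewrite !big_ord_recl big_ord0 addr0 addrA.
by congr (F _ + F _ + F _); apply/val_inj.
Qed.

Lemma row4_eq (R : Type) (x y : 'rV[R]_4) :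
  [/\ x 0 0 = y 0 0, x 0 1 = y 0 1, x 0 2 = y 0 2 & x 0 3 = y 0 3] -> x = y.
Proof. by case=> h0 h1 h2 h3; apply/rowP; apply: forall_ord4. Qed.

Lemma two_of_three (R : idomainType) (u v w : R) :
  u * v * w = 0 -> v * w + u * w + u * v = 0 ->
  [\/ u = 0 /\ v = 0, u = 0 /\ w = 0 | v = 0 /\ w = 0].
Proof.
move=> /eqP; rewrite !mulf_eq0 -orbA => /or3P[] /eqP z; rewrite z ?mul0r ?mulr0 ?addr0 ?add0r;
  move=> /eqP; rewrite mulf_eq0 => /orP[] /eqP z'; by [constructor 1|constructor 2|constructor 3].
Qed.

Section Lines.
Variable R : fieldType.
Implicit Types (c d : R) (x : 'rV[R]_4).

Definition line c d x := x 0 1 - c * x 0 3 + d.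

Definition line_meet c d c' d' : 'rV[R]_4 :=
  let v := (d - d') / (c - c') in \row_(i < 4) [:: 0; c * v - d; 0; v]`_i.

Variables (c d c' d' : R).
Hypothesis hc : c != c'.

Lemma line_translate x p : line c d x = line c 0 (x - p) + line c d p.
Proof. by rewrite /line !mxE; ring. Qed.

Lemma line_meetL : line c d (line_meet c d c' d') = 0.
Proof. by rewrite /line !mxE /=; ring. Qed.

Lemma line_meetR : line c' d' (line_meet c d c' d') = 0.
Proof.
rewrite /line !mxE /=.
have hc0 : c - c' != 0 by rewrite subr_eq0.
transitivity ((c - c') * ((d - d') / (c - c')) - (d - d')); first by ring.
by rewrite mulrC divfK // subrr.
Qed.

Lemma line_meet_uniq x : x 0 0 = 0 -> x 0 2 = 0 ->
  line c d x = 0 -> line c' d' x = 0 -> x = line_meet c d c' d'.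
Proof.
move=> x0 x2 hl hl'.
have x3 : x 0 3 = (d - d') / (c - c').
  have hc0 : c - c' != 0 by rewrite subr_eq0.
  apply: (mulfI hc0); rewrite [RHS]mulrC divfK //.
  by transitivity (line c' d' x - line c d x + (d - d')); [rewrite /line; ring | rewrite hl hl'; ring].
apply: row4_eq; rewrite !mxE /= x0 x2 -x3; split=> //.
by transitivity (line c d x + c * x 0 3 - d); [rewrite /line; ring | rewrite hl; ring].
Qed.
End Lines.

Lemma det_mx4_cross (R : comNzRingType) (p q r s t : R) :
  \det (\matrix_(i < 4, j < 4)
      nth 0 (nth [::] [:: [:: p; 0; 0; 0]; [:: 0; q; 0; r]; [:: 0; 0; s; 0]; [:: 0; r; 0; t]] i) j)
  = p * s * (q * t - r ^+ 2).
Proof.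
rewrite (expand_det_row _ ord0) !big_ord_recl big_ord0 /cofactor !mxE /= !mul0r !addr0.
rewrite (expand_det_row _ (lift ord0 ord0)) !big_ord_recl big_ord0 /cofactor !mxE /=.
rewrite !mul0r !add0r !addr0.
rewrite (expand_det_row _ ord0) !big_ord_recl big_ord0 /cofactor !det_mx11 !mxE /bump /=.
ring.
Qed.

Section Family.
Variables (R : numFieldType) (eps : R) (a : 'rV[R]_3).
Hypothesis heps : 3.-primitive_root eps.

Local Notation l0 := (line 1 (a 0 0)).
Local Notation l1 := (line eps (a 0 1)).
Local Notation l2 := (line (eps ^+ 2) (a 0 2)).

Definition Ua_mterm : mterm R :=
  let lin c d := MAdd (MAdd (MVar 1) (MOpp (MMul (MConst c) (MVar 3)))) (MConst d) in
  MAdd (MAdd (MExp (MVar 0) 2) (MOpp (MExp (MVar 2) 2)))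
    (MOpp (MMul (MMul (MAdd (MAdd (MVar 1) (MOpp (MVar 3))) (MConst (a 0 0)))
                      (lin eps (a 0 1))) (lin (eps ^+ 2) (a 0 2)))).

Lemma Ua_mtermE : Ua eps a = mterm_poly Ua_mterm.
Proof. by []. Qed.

Lemma meval_Ua x : meval (Ua eps a) x = x 0 0 ^+ 2 - x 0 2 ^+ 2 - l0 x * l1 x * l2 x.
Proof. by rewrite Ua_mtermE meval_mterm /= /line; ring. Qed.

Lemma meval_grad_Ua x :
  [/\ meval (mpd 0 (Ua eps a)) x = 2 * x 0 0,
      meval (mpd 1 (Ua eps a)) x = - (l1 x * l2 x + l0 x * l2 x + l0 x * l1 x),
      meval (mpd 2 (Ua eps a)) x = - (2 * x 0 2) &
      meval (mpd 3 (Ua eps a)) x = l1 x * l2 x + eps * (l0 x * l2 x) + eps ^+ 2 * (l0 x * l1 x)].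
Proof. by split; rewrite Ua_mtermE mpd_mterm meval_mterm /= /line; ring. Qed.

Lemma det_mhess_Ua x : \det (mhess (Ua eps a) x) =
  4 * (((1 + eps) * l2 x + (1 + eps ^+ 2) * l1 x + (eps + eps ^+ 2) * l0 x) ^+ 2
       - 4 * (l0 x + l1 x + l2 x) * (eps * l2 x + eps ^+ 2 * l1 x + eps ^+ 3 * l0 x)).
Proof.
set h11 := (l0 x + l1 x + l2 x); set h33 := (eps * l2 x + _ + _); set h13 := _ + _ + (_ + _) * _.
have -> : mhess (Ua eps a) x = \matrix_(i < 4, j < 4)
    nth 0 (nth [::] [:: [:: 2; 0; 0; 0]; [:: 0; - (2 * h11); 0; h13];
                        [:: 0; 0; -2; 0]; [:: 0; h13; 0; - (2 * h33)]] i) j.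
  apply/matrixP => i j; rewrite !mxE Ua_mtermE !mpd_mterm meval_mterm.
  by move: i j; apply: forall_ord4; apply: forall_ord4; rewrite /= /h11 /h33 /h13 /line; ring.
by rewrite det_mx4_cross; ring.
Qed.

Lemma line_sum x : l0 x + eps * l1 x + eps ^+ 2 * l2 x = sfun eps a.
Proof.
apply: (eq_mod_prim3 heps (p := x 0 1 - x 0 3) (q := - eps * x 0 3)).
by rewrite /sfun /line; ring.
Qed.

Lemma msing_UaP x : msing (Ua eps a) x <->
  [/\ x 0 0 = 0, x 0 2 = 0 &
      [\/ l0 x = 0 /\ l1 x = 0, l0 x = 0 /\ l2 x = 0 | l1 x = 0 /\ l2 x = 0]].
Proof.
have [d0 d1 d2 d3] := meval_grad_Ua x.
have n2 : 2 != 0 :> R by rewrite pnatr_eq0.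
split.
  case; rewrite meval_Ua => hU hd.
  have x0 : x 0 0 = 0 by apply: (mulfI n2); rewrite -d0 hd mulr0.
  have x2 : x 0 2 = 0 by apply: (mulfI n2); rewrite mulr0 -[LHS]opprK -d2 hd oppr0.
  split=> //; apply: two_of_three; last by apply/oppr_inj; rewrite -d1 hd oppr0.
  by move: hU; rewrite x0 x2 expr0n subrr sub0r => /eqP; rewrite oppr_eq0 => /eqP.
case=> x0 x2 hl; split; last apply: forall_ord4;
  rewrite ?meval_Ua ?d0 ?d1 ?d2 ?d3 ?x0 ?x2; case: hl => -[h h']; rewrite ?h ?h'; ring.
Qed.

Local Notation P01 := (line_meet 1 (a 0 0) eps (a 0 1)).
Local Notation P02 := (line_meet 1 (a 0 0) (eps ^+ 2) (a 0 2)).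
Local Notation P12 := (line_meet eps (a 0 1) (eps ^+ 2) (a 0 2)).

Lemma msing_Ua x : msing (Ua eps a) x <-> [\/ x = P01, x = P02 | x = P12].
Proof.
have h01 : (1 : R) != eps by rewrite eq_sym prim3_neq1.
have h02 : (1 : R) != eps ^+ 2 by rewrite eq_sym prim3_sqr_neq1.
have h12 := prim3_sqr_neq heps.
rewrite msing_UaP; split.
  case=> x0 x2 [] [hl hl'];
    [constructor 1 | constructor 2 | constructor 3]; exact: line_meet_uniq.
case=> ->; (split; [by rewrite mxE | by rewrite mxE | ]).
- by constructor 1; split; [exact: line_meetL | exact: line_meetR h01].
- by constructor 2; split; [exact: line_meetL | exact: line_meetR h02].
- by constructor 3; split; [exact: line_meetL | exact: line_meetR h12].
Qed.

Lemma det_mhess_Ua_sing x : msing (Ua eps a) x ->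
  \det (mhess (Ua eps a) x) = - 12 * sfun eps a ^+ 2.
Proof.
case/msing_UaP => _ _ hl; rewrite det_mhess_Ua -(line_sum x).
case: hl => -[-> ->].
- by apply: (eq_mod_prim3 heps (p := 4 * l2 x ^+ 2) (q := 12 * eps * l2 x ^+ 2)); ring.
- by apply: (eq_mod_prim3 heps (p := 4 * l1 x ^+ 2) (q := 4 * eps * l1 x ^+ 2)); ring.
- by apply: (eq_mod_prim3 heps (p := 4 * eps ^+ 2 * l0 x ^+ 2) (q := - 12 * l0 x ^+ 2)); ring.
Qed.

Lemma odp_Ua x : sfun eps a != 0 -> msing (Ua eps a) x -> odp (Ua eps a) x.
Proof.
move=> hs hx; split=> //; rewrite det_mhess_Ua_sing //.
by rewrite mulf_neq0 ?oppr_eq0 ?pnatr_eq0 ?expf_neq0.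
Qed.

Lemma three_nodes_Ua : sfun eps a != 0 ->
  exists p1 p2 p3 : 'rV[R]_4,
    [/\ p1 != p2, p1 != p3, p2 != p3,
        (forall x, msing (Ua eps a) x <-> [\/ x = p1, x = p2 | x = p3]) &
        [/\ odp (Ua eps a) p1, odp (Ua eps a) p2 & odp (Ua eps a) p3]].
Proof.
move=> hs.
have h01 : (1 : R) != eps by rewrite eq_sym prim3_neq1.
have h02 : (1 : R) != eps ^+ 2 by rewrite eq_sym prim3_sqr_neq1.
have h12 := prim3_sqr_neq heps.
have concurrent x : l0 x = 0 -> l1 x = 0 -> l2 x = 0 -> sfun eps a = 0.
  by move=> z0 z1 z2; rewrite -(line_sum x) z0 z1 z2; ring.
exists P01, P02, P12; split.
- apply/eqP => E; move/eqP: hs; apply; apply: (concurrent P01).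
  + exact: line_meetL.
  + exact: line_meetR h01.
  + by rewrite E; exact: line_meetR h02.
- apply/eqP => E; move/eqP: hs; apply; apply: (concurrent P01).
  + exact: line_meetL.
  + exact: line_meetR h01.
  + by rewrite E; exact: line_meetR h12.
- apply/eqP => E; move/eqP: hs; apply; apply: (concurrent P02).
  + exact: line_meetL.
  + by rewrite E; exact: line_meetL.
  + exact: line_meetR h02.
- exact: msing_Ua.
- by split; apply: odp_Ua => //; apply/msing_Ua; [constructor 1 | constructor 2 | constructor 3].
Qed.
End Family.

Section Cusp.
Variables (R : numFieldType) (eps : R) (a : 'rV[R]_3).
Hypothesis heps : 3.-primitive_root eps.
Hypothesis hs : sfun eps a = 0.

Local Notation P := (line_meet 1 (a 0 0) eps (a 0 1)).

Lemma lines_concurrent :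
  [/\ line 1 (a 0 0) P = 0, line eps (a 0 1) P = 0 & line (eps ^+ 2) (a 0 2) P = 0].
Proof.
have h01 : (1 : R) != eps by rewrite eq_sym prim3_neq1.
have l0 : line 1 (a 0 0) P = 0 by exact: line_meetL.
have l1 : line eps (a 0 1) P = 0 by exact: line_meetR h01.
split=> //; apply: (mulfI (expf_neq0 2 (prim3_neq0 heps))).
by rewrite mulr0 -hs -(line_sum a heps P) l0 l1 mulr0 !add0r.
Qed.

Lemma msing_Ua_cusp x : msing (Ua eps a) x <-> x = P.
Proof.
have [l0 l1 l2] := lines_concurrent.
have P0 : P 0 0 = 0 by rewrite mxE.
have P2 : P 0 2 = 0 by rewrite mxE.
rewrite (msing_Ua a heps); split; last by move->; constructor 1.
case=> // ->; symmetry; apply: line_meet_uniq => //.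
- by rewrite eq_sym prim3_sqr_neq1.
- exact: prim3_sqr_neq.
Qed.

Lemma meval_Ua_cusp x : meval (Ua eps a) x = meval (Ua eps 0) (x - P).
Proof.
have [l0 l1 l2] := lines_concurrent.
rewrite [LHS]meval_Ua [RHS]meval_Ua (line_translate _ _ x P) (line_translate eps _ x P).
rewrite (line_translate (eps ^+ 2) _ x P) l0 l1 l2 !mxE /=.
ring.
Qed.
End Cusp.

Section Pullback.
Variables (R : numFieldType) (eps : R).
Hypothesis heps : 3.-primitive_root eps.

Lemma meval_Xmv (L y : 'rV[R]_4) : meval (Xmv L) y =
  y 0 0 ^+ 2 - y 0 1 ^+ 3 - y 0 2 ^+ 2 + y 0 3 ^+ 3 + L 0 0 + L 0 1 * y 0 1
  - L 0 2 * y 0 3 + L 0 3 * y 0 1 * y 0 3.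
Proof.
have -> : Xmv L = mterm_poly
  (MAdd (MAdd (MAdd (MAdd (MAdd (MAdd (MAdd (MExp (MVar 0) 2) (MOpp (MExp (MVar 1) 3)))
     (MOpp (MExp (MVar 2) 2))) (MExp (MVar 3) 3)) (MConst (L 0 0)))
     (MMul (MConst (L 0 1)) (MVar 1))) (MOpp (MMul (MConst (L 0 2)) (MVar 3))))
     (MMul (MMul (MConst (L 0 3)) (MVar 1)) (MVar 3))) by [].
by rewrite meval_mterm /=; ring.
Qed.

Let k : R := 3^-1.

Definition pullback_shift : 'M[R]_(3, 4) :=
  \matrix_(i < 3, j < 4)
     nth 0 (nth [::] [:: [:: 0; k; 0; - k]; [:: 0; k; 0; - (eps ^+ 2 * k)];
                        [:: 0; k; 0; - (eps * k)]] i) j.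

Lemma Ua_pullback a x :
  meval (Ua eps a) x = meval (Xmv (gmap k eps a)) (x + a *m pullback_shift).
Proof.
set Y := x 0 1 + k * (a 0 0 + a 0 1 + a 0 2).
set V := x 0 3 - k * (a 0 0 + eps ^+ 2 * a 0 1 + eps * a 0 2).
set t := k * sfun eps a.
have e0 : line 1 (a 0 0) x = Y + - V + t.
  apply: (eq_mod_prim3 heps (p := - k * (a 0 1 + a 0 2)) (q := 0)).
  by rewrite /Y /V /t /line /sfun /k; field.
have e1 : line eps (a 0 1) x = Y + eps * - V + eps ^+ 2 * t.
  apply: (eq_mod_prim3 heps (p := - k * (a 0 0 + a 0 2)) (q := - k * (2 * a 0 1 + eps * a 0 2))).
  by rewrite /Y /V /t /line /sfun /k; field.
have e2 : line (eps ^+ 2) (a 0 2) x = Y + eps ^+ 2 * - V + eps * t.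
  apply: (eq_mod_prim3 heps (p := - k * (a 0 0 + a 0 1)) (q := - k * (2 * a 0 2 + eps * a 0 1))).
  by rewrite /Y /V /t /line /sfun /k; field.
rewrite [LHS]meval_Ua [RHS]meval_Xmv e0 e1 e2 prim3_cube_sum //.
rewrite !mxE !sum_ord3 !mxE /= /Y /V /t; ring.
Qed.

Lemma gmap_onC L : (exists a, gmap k eps a = L) <-> onC L.
Proof.
split=> [[b <-]|[hL [hL1 hL2]]].
  by rewrite /onC /gmap !mxE /=; split=> //; rewrite /k; field.
exists (\row_(i < 3) [:: - L 0 3; 0; 0]`_i).
apply: row4_eq; rewrite /gmap /sfun !mxE /= hL1 hL2; split=> //; last by rewrite /k; field.
transitivity (k ^+ 3 * (L 0 3 ^+ 3 - 27 * L 0 0) + L 0 0); first by rewrite /k; field.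
by rewrite hL mulr0 add0r.
Qed.
End Pullback.

Theorem mainTheorem7 (R : numClosedFieldType) (eps : R)
  (heps : 3.-primitive_root eps) :
  (* (1) s = 0: unique singular point, equivalent to the cusp U_0 at 0 *)
  (forall a : 'rV[R]_3, sfun eps a = 0 ->
     exists p : 'rV[R]_4,
       (forall x, msing (Ua eps a) x <-> x = p) /\
       exists (c : R) (A : 'M[R]_4), [/\ c != 0, A \in unitmx &
         forall x, meval (Ua eps a) x = c * meval (Ua eps 0) ((x - p) *m A)])
  /\
  (* (2) s <> 0: exactly three distinct singular points, all ordinary double points *)
  (forall a : 'rV[R]_3, sfun eps a != 0 ->
     exists p1 p2 p3 : 'rV[R]_4,
       [/\ p1 != p2, p1 != p3, p2 != p3,
           (forall x, msing (Ua eps a) x <-> [\/ x = p1, x = p2 | x = p3]) &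
           [/\ odp (Ua eps a) p1, odp (Ua eps a) p2 & odp (Ua eps a) p3]])
  /\
  (* (3) U is the pull-back of the miniversal deformation along g, image of g = C *)
  (exists k : R, k != 0 /\
     (exists (c : R) (A : 'M[R]_4) (B : 'M[R]_(3, 4)),
        [/\ c != 0, A \in unitmx &
          forall (a : 'rV[R]_3) (x : 'rV[R]_4),
            meval (Ua eps a) x = c * meval (Xmv (gmap k eps a)) (x *m A + a *m B)]) /\
     (forall L : 'rV[R]_4, (exists a : 'rV[R]_3, gmap k eps a = L) <-> onC L)).
Proof.
split; [|split].
- move=> a hs; exists (line_meet 1 (a 0 0) eps (a 0 1)).
  split; first exact: msing_Ua_cusp.
  exists 1, 1%:M; split; [exact: oner_neq0 | exact: unitmx1 | move=> x].
  by rewrite mul1r mulmx1; exact: meval_Ua_cusp.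
- by move=> a; exact: three_nodes_Ua.
- exists 3^-1; split; first by rewrite invr_eq0 pnatr_eq0.
  split; last exact: gmap_onC.
  exists 1, 1%:M, (pullback_shift eps); split; [exact: oner_neq0 | exact: unitmx1 | move=> a x].
  by rewrite mul1r mulmx1; exact: Ua_pullback.
Qed.
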